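(* Fix $V_{\sf P}\ge0$. Let ${\sf OPT}$ denote the oracle policy that knows the realization of $V_{\sf N}$ at time $0$ and at every time recommends two items of the type with the larger base utility (two niche items if $V_{\sf N}>V_{\sf P}$, two popular items otherwise). Then $$\lim_{\delta\to1}\lim_{p\to0}\frac{{\sf Util}({\sf PEAR})}{{\sf Util}({\sf OPT})}=1.$$
   Context: Model. Time $t=0,1,2,\dots$, discount factor $\delta\in[0,1)$. Two item types, popular ${\sf P}$ and niche ${\sf N}$, infinitely many items each; at each time $t$ the platform recommends a set $\pi_t$ of two fresh items of chosen types. Utility of item $i$: $u_i=V_{\tau(i)}+\epsilon_i$; outside option: $u_\emptyset=\epsilon_\emptyset$; all noises i.i.d. Gumbel with scale $1$ and mean $0$. User chooses $c_t=\arg\max_{j\in\pi_t\cup\{\emptyset\}}u_j$. $V_{\sf P}$ is a known constant; $V_{\sf N}$ is drawn once, fixed over time, independent of noise, with $\mathbb P(V_{\sf N}=(1-p)/p)=p$, $\mathbb P(V_{\sf N}=-1)=1-p$, $p\in(0,1)$. ${\sf Util}(\pi)=\sum_{t\ge0}\delta^t\mathbb E[\max_{j\in\pi_t\cup\{\emptyset\}}u_j]$ (expectation also over $V_{\sf N}$). Policy ${\sf PEAR}$: let $\rho_1=\frac{e^{(1-p)/p}}{1+e^{V_{\sf P}}+e^{(1-p)/p}}$, $\rho_2=\frac{e^{-1}}{1+e^{V_{\sf P}}+e^{-1}}$. Maintain counters $S,F$ (initially $0$) and $p_0=p$. At each time $t$: if $p_t\ge p$, recommend one popular and one niche item; if the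 niche item is chosen increment $S$, otherwise increment $F$. If $p_t<p$, recommend two popular items. Then set $p_{t+1}=\left(1+\frac{1-p}{p}\cdot\frac{\rho_2^S(1-\rho_2)^F}{\rho_1^S(1-\rho_1)^F}\right)^{-1}$. *)

From Stdlib Require Import Reals Arith Bool.
From Coquelicot Require Import Coquelicot.
Open Scope R_scope.

(* Expected utility of the best option among a recommended pair with base
   utilities a, b, plus the outside option (base utility 0), when all noises
   are i.i.d. Gumbel with scale 1 and MEAN 0:
     E[max(eps0, a+eps1, b+eps2)] = ln(1 + e^a + e^b). *)
Definition emax2 (a b : R) : R := ln (1 + exp a + exp b).

(* Logit probability that the niche item (base utility v) is chosen from the
   pair {popular (base VP), niche (base v)} plus outside option. *)
Definition choiceN (VP v : R) : R := exp v / (1 + exp VP + exp v).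

Definition vhigh (p : R) : R := (1 - p) / p.
Definition vlow : R := -1.

Definition rho1 (VP p : R) : R := exp (vhigh p) / (1 + exp VP + exp (vhigh p)).
Definition rho2 (VP : R) : R := exp (-1) / (1 + exp VP + exp (-1)).

(* PEAR's posterior p_t as a function of the counters (S,F); for S = F = 0
   it equals p = p_0. *)
Definition posterior (VP p : R) (s f : nat) : R :=
  / (1 + (1 - p) / p *
         ((rho2 VP ^ s * (1 - rho2 VP) ^ f) /
          (rho1 VP p ^ s * (1 - rho1 VP p) ^ f))).

(* PEAR explores (recommends one popular + one niche) iff p_t >= p. *)
Definition explore (VP p : R) (s f : nat) : bool :=
  if Rle_dec p (posterior VP p s f) then true else false.

(* Probability, given the realization V_N = v, that PEAR's counters equal
   (s,f) at time t. *)
Fixpoint pear_prob (VP p v : R) (t s f : nat) {struct t} : R :=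
  match t with
  | O => if (Nat.eqb s 0 && Nat.eqb f 0)%bool then 1 else 0
  | Datatypes.S t' =>
      (if explore VP p s f then 0 else pear_prob VP p v t' s f)
      + match s with
        | O => 0
        | Datatypes.S s' =>
            if explore VP p s' f then pear_prob VP p v t' s' f * choiceN VP v else 0
        end
      + match f with
        | O => 0
        | Datatypes.S f' =>
            if explore VP p s f' then pear_prob VP p v t' s f' * (1 - choiceN VP v) else 0
        end
  end.

Definition pear_stage_util (VP p v : R) (s f : nat) : R :=
  if explore VP p s f then emax2 VP v else emax2 VP VP.

(* E[max utility at time t | V_N = v] under PEAR (counters at time t satisfy
   s + f <= t, so summing over [0,t]^2 covers the support). *)
Definition pear_time_util (VP p v : R) (t : nat) : R :=
  sum_f_R0 (fun s => sum_f_R0 (fun f =>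
      pear_prob VP p v t s f * pear_stage_util VP p v s f) t) t.

Definition UtilPEAR (VP p delta : R) : R :=
  Series (fun t => delta ^ t *
    (p * pear_time_util VP p (vhigh p) t + (1 - p) * pear_time_util VP p vlow t)).

Definition opt_stage_util (VP v : R) : R :=
  if Rlt_dec VP v then emax2 v v else emax2 VP VP.

Definition UtilOPT (VP p delta : R) : R :=
  Series (fun t => delta ^ t *
    (p * opt_stage_util VP (vhigh p) + (1 - p) * opt_stage_util VP vlow)).

From Stdlib Require Import Reals Lra Lia.
From Coquelicot Require Import Coquelicot.
Open Scope R_scope.

(* As p -> 0 the niche value (1 - p)/p is so large that p * ln (K + a e^((1-p)/p)) -> 1: weighted
   by its probability p, the high state is worth 1 per period to OPT and also to PEAR, whose niche
   item is then chosen with probability rho1 -> 1.  In the low state OPT earns L = ln (1 + 2 e^V_P)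
   per period.  PEAR, on any fixed horizon and for p small enough, explores exactly until the first
   rejection: a success never lowers the posterior since rho2 <= rho1, while one rejection
   multiplies the likelihood ratio by (1 - rho2)/(1 - rho1) -> oo.  So at time t it earns
   E = ln (1 + e^V_P + e^-1) with probability rho2^t and L otherwise.  Dominated convergence for
   series gives Util(PEAR) -> (1 + L)/(1 - delta) + (E - L)/(1 - delta rho2) and
   Util(OPT) -> (1 + L)/(1 - delta); their ratio is 1 + O(1 - delta). *)

Section FilterlimArith.

Context {T : Type} {F : (T -> Prop) -> Prop} {FF : Filter F}.

Lemma filterlim_plus_R (f g : T -> R) (a b : R) :
  filterlim f F (locally a) -> filterlim g F (locally b) ->
  filterlim (fun x => f x + g x) F (locally (a + b)).
Proof. intros Hf Hg. exact (filterlim_comp_2 f g Rplus Hf Hg (filterlim_plus a b)). Qed.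

Lemma filterlim_mult_R (f g : T -> R) (a b : R) :
  filterlim f F (locally a) -> filterlim g F (locally b) ->
  filterlim (fun x => f x * g x) F (locally (a * b)).
Proof. intros Hf Hg. exact (filterlim_comp_2 f g Rmult Hf Hg (filterlim_mult a b)). Qed.

Lemma filterlim_minus_R (f g : T -> R) (a b : R) :
  filterlim f F (locally a) -> filterlim g F (locally b) ->
  filterlim (fun x => f x - g x) F (locally (a - b)).
Proof.
  intros Hf Hg.
  exact (filterlim_plus_R f _ a _ Hf (filterlim_comp _ _ _ g Ropp F _ _ Hg (filterlim_opp b))).
Qed.

Lemma filterlim_pow_R (f : T -> R) (a : R) (n : nat) :
  filterlim f F (locally a) -> filterlim (fun x => f x ^ n) F (locally (a ^ n)).
Proof.
  intros Hf. induction n as [|n IH].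
  - apply filterlim_const.
  - exact (filterlim_mult_R _ _ _ _ Hf IH).
Qed.

Lemma filterlim_div_R (f g : T -> R) (a b : R) :
  b <> 0 -> filterlim f F (locally a) -> filterlim g F (locally b) ->
  filterlim (fun x => f x / g x) F (locally (a / b)).
Proof.
  intros Hb Hf Hg. apply (filterlim_mult_R _ _ _ _ Hf).
  apply (filterlim_comp _ _ _ g Rinv F _ _ Hg).
  apply (filterlim_Rbar_inv (Finite b)). intros E. apply Hb. now injection E.
Qed.

Lemma filterlim_eventually_lt (f : T -> R) (l m : R) :
  filterlim f F (locally l) -> l < m -> F (fun x => f x < m).
Proof. intros Hf Hlm. exact (Hf _ (open_lt m l Hlm)). Qed.

Lemma filterlim_eventually_gt (f : T -> R) (l m : R) :
  filterlim f F (locally l) -> m < l -> F (fun x => m < f x).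
Proof. intros Hf Hml. exact (Hf _ (open_gt m l Hml)). Qed.

End FilterlimArith.

Lemma at_right_le_locally (x : R) : filter_le (at_right x) (locally x).
Proof. intros P HP. exact (filter_imp P _ (fun y Py _ => Py) HP). Qed.

Lemma at_left_le_locally (x : R) : filter_le (at_left x) (locally x).
Proof. intros P HP. exact (filter_imp P _ (fun y Py _ => Py) HP). Qed.

Lemma filterlim_at_right_id (x : R) : filterlim (fun p => p) (at_right x) (locally x).
Proof. exact (filterlim_filter_le_1 _ (at_right_le_locally x) (filterlim_id _ _)). Qed.

Lemma at_right_0_interval (eta : R) : 0 < eta -> at_right 0 (fun p => 0 < p < eta).
Proof.
  intros Heta. exists (mkposreal eta Heta). intros y Hy Hy0. split; [exact Hy0|].
  change (Rabs (y - 0) < eta) in Hy. apply Rabs_def2 in Hy. lra.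
Qed.

(** * Dominated convergence for series *)

Lemma filter_forall_lt {T : Type} {F : (T -> Prop) -> Prop} {FF : Filter F}
    (P : nat -> T -> Prop) (N : nat) :
  (forall t, F (P t)) -> F (fun x => forall t, (t < N)%nat -> P t x).
Proof.
  intros HP. induction N as [|N IH].
  - apply filter_forall. intros x t Ht. lia.
  - generalize (filter_and _ _ IH (HP N)). apply filter_imp.
    intros x [Hlt HN] t Ht. destruct (Nat.eq_dec t N) as [->|Hne]; [exact HN|].
    apply Hlt. lia.
Qed.

Lemma geometric_domination (B r q e : R) :
  0 <= r < q -> 0 < e -> exists N, forall t, (N <= t)%nat -> B * r ^ t <= e * q ^ t.
Proof.
  intros Hrq He.
  assert (Hratio : Rabs (r / q) < 1).
  { rewrite Rabs_right by (apply Rle_ge, Rdiv_le_0_compat; lra).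
    apply (Rdiv_lt_1 r q); lra. }
  assert (HB : 0 < Rabs B + 1) by (pose proof (Rabs_pos B); lra).
  destruct (pow_lt_1_zero _ Hratio (e / (Rabs B + 1))) as [N HN];
    [apply Rdiv_lt_0_compat; lra|].
  exists N. intros t Ht. specialize (HN t Ht).
  assert (Hsplit : r ^ t = (r / q) ^ t * q ^ t)
    by (rewrite <- Rpow_mult_distr; f_equal; field; lra).
  assert (Hq : 0 < q ^ t) by (apply pow_lt; lra).
  assert (Hsmall : (Rabs B + 1) * Rabs ((r / q) ^ t) <= e).
  { apply Rlt_le, Rle_div_r in HN; lra. }
  rewrite Hsplit.
  pose proof (Rle_abs (B * (r / q) ^ t)) as Habs. rewrite Rabs_mult in Habs.
  pose proof (Rabs_pos B). pose proof (Rabs_pos ((r / q) ^ t)).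
  nra.
Qed.

Lemma is_series_geom_scal (e q : R) :
  0 <= q < 1 -> is_series (fun t => e * q ^ t) (e / (1 - q)).
Proof.
  intros Hq. assert (Hgeom : Rabs q < 1) by (rewrite Rabs_right; lra).
  exact (is_series_scal_l e _ _ (is_series_geom q Hgeom)).
Qed.

Lemma Series_dist_le_geom (u v : nat -> R) (e q : R) :
  ex_series u -> ex_series v -> 0 <= q < 1 ->
  (forall t, Rabs (u t - v t) <= e * q ^ t) ->
  Rabs (Series u - Series v) <= e / (1 - q).
Proof.
  intros Hu Hv Hq Huv.
  pose proof (is_series_geom_scal e q Hq) as Hgeom.
  assert (Hdist : ex_series (fun t => Rabs (u t - v t))).
  { apply (@ex_series_le R_AbsRing R_CompleteNormedModule _ (fun t => e * q ^ t));
      [|eexists; exact Hgeom].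
    intros t. change (Rabs (Rabs (u t - v t)) <= e * q ^ t).
    rewrite Rabs_Rabsolu. apply Huv. }
  rewrite <- Series_minus by assumption.
  eapply Rle_trans; [apply Series_Rabs, Hdist|].
  rewrite <- (is_series_unique _ _ Hgeom).
  apply Series_le; [|eexists; exact Hgeom].
  intros t. split; [apply Rabs_pos|apply Huv].
Qed.

Lemma filterlim_Series_dominated {T : Type} {F : (T -> Prop) -> Prop} {FF : ProperFilter F}
    (a : T -> nat -> R) (b : nat -> R) (B r : R) :
  0 <= r < 1 ->
  (forall t, filterlim (fun x => a x t) F (locally (b t))) ->
  F (fun x => forall t, Rabs (a x t) <= B * r ^ t) ->
  filterlim (fun x => Series (a x)) F (locally (Series b)).
Proof.
  intros Hr Hlim Hdom.
  assert (Hb : forall t, Rabs (b t) <= B * r ^ t).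
  { intros t.
    refine (@filterlim_le _ F (Proper_StrongProper F FF)
              (fun x => Rabs (a x t)) (fun _ => B * r ^ t) (Rabs (b t)) (B * r ^ t) _ _ _).
    - exact (filter_imp _ _ (fun x Hx => Hx t) Hdom).
    - exact (filterlim_comp _ _ _ _ _ _ _ _ (Hlim t) (filterlim_Rabs (b t))).
    - apply filterlim_const. }
  assert (Hex : forall u : nat -> R, (forall t, Rabs (u t) <= B * r ^ t) -> ex_series u).
  { intros u Hu. apply (@ex_series_le R_AbsRing R_CompleteNormedModule _ _ Hu). eexists.
    apply is_series_geom_scal. lra. }
  (* Allow an error e q^t on term t, with r < q < 1: the first N terms are eventually that
     close, and beyond N the domination gives |a x t - b t| <= 2 B r^t <= e q^t. *)
  apply filterlim_locally. intros eps.
  set (q := (1 + r) / 2).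
  set (e := eps / 2 * (1 - q)).
  assert (Hq : 0 <= r < q /\ q < 1) by (unfold q; lra).
  assert (He : 0 < e) by (unfold e; pose proof (cond_pos eps); nra).
  destruct (geometric_domination (2 * B) r q e (proj1 Hq) He) as [N Htail].
  assert (Hhead : F (fun x => forall t, (t < N)%nat -> Rabs (a x t - b t) <= e * q ^ t)).
  { apply filter_forall_lt. intros t.
    assert (Hpos : 0 < e * q ^ t) by (apply Rmult_lt_0_compat, pow_lt; lra).
    generalize (proj1 (filterlim_locally _ _) (Hlim t) (mkposreal _ Hpos)).
    apply filter_imp. intros x Hx. apply Rlt_le, Hx. }
  generalize (filter_and _ _ Hhead Hdom). apply filter_imp. intros x [Hx Hax].
  change (Rabs (Series (a x) - Series b) < eps).
  eapply Rle_lt_trans.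
  - apply (Series_dist_le_geom _ _ e q); [apply Hex, Hax|apply Hex, Hb|lra|].
    intros t. destruct (Nat.lt_ge_cases t N) as [HtN|HtN]; [apply Hx, HtN|].
    eapply Rle_trans; [apply Rabs_triang|]. rewrite Rabs_Ropp.
    specialize (Htail t HtN). pose proof (Hax t). pose proof (Hb t). lra.
  - unfold e. pose proof (cond_pos eps).
    replace (eps / 2 * (1 - q) / (1 - q)) with (eps / 2) by (field; lra). lra.
Qed.

Lemma choiceN_bounds (VP v : R) : 0 < choiceN VP v < 1.
Proof.
  unfold choiceN. pose proof (exp_pos VP). pose proof (exp_pos v).
  split; [apply Rdiv_lt_0_compat; lra|apply (Rdiv_lt_1 (exp v)); lra].
Qed.

Lemma choiceN_le_compat (VP v w : R) : v <= w -> choiceN VP v <= choiceN VP w.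
Proof.
  intros Hvw. unfold choiceN.
  assert (Hexp : exp v <= exp w)
    by (destruct (Req_dec v w) as [->|]; [lra|left; apply exp_increasing; lra]).
  pose proof (exp_pos VP). pose proof (exp_pos v).
  set (Dv := 1 + exp VP + exp v). set (Dw := 1 + exp VP + exp w).
  assert (Hdiff : exp w / Dw - exp v / Dv = (1 + exp VP) * (exp w - exp v) / (Dv * Dw))
    by (unfold Dv, Dw; field; lra).
  assert (0 <= (1 + exp VP) * (exp w - exp v) / (Dv * Dw))
    by (apply Rdiv_le_0_compat; unfold Dv, Dw; nra).
  lra.
Qed.

Lemma emax2_nonneg (a b : R) : 0 <= emax2 a b.
Proof.
  unfold emax2. rewrite <- ln_1. pose proof (exp_pos a). pose proof (exp_pos b).
  apply ln_le; lra.
Qed.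

Lemma exp_vhigh_ge (p : R) : 0 < p -> / p <= exp (vhigh p).
Proof.
  intros Hp. replace (/ p) with (1 + vhigh p) by (unfold vhigh; field; lra).
  apply exp_ineq1_le.
Qed.

Lemma one_sub_rho1_le (VP p : R) : 0 < p -> 1 - rho1 VP p <= (1 + exp VP) * p.
Proof.
  intros Hp. unfold rho1.
  pose proof (exp_pos VP). pose proof (exp_pos (vhigh p)).
  assert (Hpe : 1 <= p * exp (vhigh p)).
  { pose proof (exp_vhigh_ge p Hp) as Hev.
    apply (Rmult_le_compat_l p) in Hev; [|lra]. rewrite Rinv_r in Hev; lra. }
  replace (1 - exp (vhigh p) / (1 + exp VP + exp (vhigh p)))
    with ((1 + exp VP) / (1 + exp VP + exp (vhigh p))) by (field; lra).
  apply Rle_div_l; [lra|]. nra.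
Qed.

Lemma rho1_limit (VP : R) : filterlim (rho1 VP) (at_right 0) (locally 1).
Proof.
  pose proof (filterlim_minus_R _ _ 1 _ (filterlim_const 1)
    (filterlim_mult_R _ _ (1 + exp VP) 0 (filterlim_const _) (filterlim_at_right_id 0))) as Hlow.
  rewrite Rmult_0_r, Rminus_0_r in Hlow.
  apply (filterlim_le_le (fun p => 1 - (1 + exp VP) * p) _ (fun _ => 1) 1);
    [|exact Hlow|apply filterlim_const].
  generalize (at_right_0_interval 1 Rlt_0_1). apply filter_imp. intros p Hp.
  pose proof (one_sub_rho1_le VP p (proj1 Hp)). pose proof (choiceN_bounds VP (vhigh p)).
  unfold rho1 in *. fold (choiceN VP (vhigh p)) in *. lra.
Qed.

Lemma p_ln_exp_vhigh_limit (K a : R) : 0 <= K -> 0 < a ->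
  filterlim (fun p => p * ln (K + a * exp (vhigh p))) (at_right 0) (locally 1).
Proof.
  intros HK Ha.
  assert (Hbounds : forall p, 0 < p < 1 ->
    p * ln a + (1 - p) <= p * ln (K + a * exp (vhigh p))
                        <= p * ln a + (1 - p) + K / a * (p * p)).
  { intros p Hp. set (v := vhigh p).
    assert (Hpv : p * v = 1 - p) by (unfold v, vhigh; field; lra).
    assert (Hpe : 1 <= p * exp v).
    { pose proof (exp_vhigh_ge p (proj1 Hp)) as Hev. fold v in Hev.
      apply (Rmult_le_compat_l p) in Hev; [|lra]. rewrite Rinv_r in Hev; lra. }
    assert (Hexp : forall w, exp (ln a + v + w) = a * exp v * exp w)
      by (intros w; rewrite !exp_plus, exp_ln; lra).
    pose proof (exp_pos v).
    assert (Hlo : ln a + v <= ln (K + a * exp v)).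
    { rewrite <- (ln_exp (ln a + v)). apply ln_le; [apply exp_pos|].
      rewrite exp_plus, exp_ln by exact Ha. lra. }
    assert (Hhi : ln (K + a * exp v) <= ln a + v + K / a * p).
    { rewrite <- (ln_exp (ln a + v + K / a * p)). apply ln_le; [nra|].
      rewrite Hexp. pose proof (exp_ineq1_le (K / a * p)).
      assert (Hlin : a * exp v * (1 + K / a * p) = a * exp v + K * (p * exp v))
        by (field; lra).
      assert (a * exp v * (1 + K / a * p) <= a * exp v * exp (K / a * p))
        by (apply Rmult_le_compat_l; nra).
      nra. }
    apply (Rmult_le_compat_l p) in Hlo, Hhi; lra. }
  pose proof (filterlim_at_right_id 0) as Hp.
  pose proof (filterlim_plus_R _ _ _ _
    (filterlim_mult_R _ _ _ _ Hp (filterlim_const (ln a)))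
    (filterlim_minus_R _ _ _ _ (filterlim_const 1) Hp)) as Hlow.
  pose proof (filterlim_plus_R _ _ _ _ Hlow
    (filterlim_mult_R _ _ _ _ (filterlim_const (K / a)) (filterlim_mult_R _ _ _ _ Hp Hp)))
    as Hup.
  rewrite Rmult_0_l, Rminus_0_r, Rplus_0_l in Hlow, Hup.
  rewrite Rmult_0_l, Rmult_0_r, Rplus_0_r in Hup.
  apply (filterlim_le_le _ _ _ 1 (filter_imp _ _ Hbounds (at_right_0_interval 1 Rlt_0_1))
           Hlow Hup).
Qed.

Lemma p_emax2_vhigh_limit (VP : R) :
  filterlim (fun p => p * emax2 VP (vhigh p)) (at_right 0) (locally 1).
Proof.
  apply (filterlim_ext (fun p => p * ln ((1 + exp VP) + 1 * exp (vhigh p)))).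
  - intros p. unfold emax2. now rewrite Rmult_1_l.
  - apply p_ln_exp_vhigh_limit; [pose proof (exp_pos VP)|]; lra.
Qed.

Lemma p_emax2_vhigh_vhigh_limit :
  filterlim (fun p => p * emax2 (vhigh p) (vhigh p)) (at_right 0) (locally 1).
Proof.
  apply (filterlim_ext (fun p => p * ln (1 + 2 * exp (vhigh p)))).
  - intros p. unfold emax2. do 2 f_equal. ring.
  - apply p_ln_exp_vhigh_limit; lra.
Qed.

(** * PEAR's counter process *)

Lemma sum_f_R0_single (g : nat -> R) (n k : nat) :
  (k <= n)%nat -> (forall i, i <> k -> g i = 0) -> sum_f_R0 g n = g k.
Proof.
  intros Hk Hg. induction n as [|n IH].
  - now replace k with 0%nat by lia.
  - rewrite tech5. destruct (Nat.eq_dec k (S n)) as [->|Hne].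
    + rewrite (sum_eq _ (fun _ => 0)); [rewrite sum_cte; ring|]. intros i Hi. apply Hg. lia.
    + rewrite IH, (Hg (S n)) by lia. ring.
Qed.

Lemma sum_f_R0_shift (g : nat -> R) (n : nat) :
  g (S n) = 0 ->
  sum_f_R0 (fun i => match i with O => 0 | S j => g j end) (S n) = sum_f_R0 g (S n).
Proof.
  intros Hg. rewrite decomp_sum, tech5, Hg by lia. simpl. now rewrite Rplus_0_l, Rplus_0_r.
Qed.

Section PearProcess.

Variables (VP p v : R).

Lemma pear_prob_nonneg t s f : 0 <= pear_prob VP p v t s f.
Proof.
  pose proof (choiceN_bounds VP v) as Hc.
  revert s f. induction t as [|t IH]; intros s f; cbn [pear_prob].
  - destruct (_ && _)%bool; lra.
  - apply Rplus_le_le_0_compat; [apply Rplus_le_le_0_compat|].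
    + destruct (explore VP p s f); [lra|apply IH].
    + destruct s as [|s]; [lra|].
      destruct (explore VP p s f); [apply Rmult_le_pos; [apply IH|lra]|lra].
    + destruct f as [|f]; [lra|].
      destruct (explore VP p s f); [apply Rmult_le_pos; [apply IH|lra]|lra].
Qed.

Lemma pear_prob_support t s f : (t < s + f)%nat -> pear_prob VP p v t s f = 0.
Proof.
  revert s f. induction t as [|t IH]; intros s f Hst; cbn [pear_prob].
  - destruct s, f; [lia|reflexivity..].
  - rewrite (IH s f) by lia.
    destruct s as [|s], f as [|f]; rewrite ?IH by lia;
      repeat match goal with |- context [if ?b then _ else _] => destruct b end; ring.
Qed.

Lemma pear_prob_mass t N : (t <= N)%nat ->
  sum_f_R0 (fun s => sum_f_R0 (fun f => pear_prob VP p v t s f) N) N = 1.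
Proof.
  revert N. induction t as [|t IH]; intros N HN.
  - rewrite (sum_f_R0_single _ N 0), (sum_f_R0_single _ N 0); try lia; [reflexivity| |].
    + intros f Hf. apply pear_prob_support. lia.
    + intros s Hs. rewrite (sum_f_R0_single _ N 0); [|lia|].
      * apply pear_prob_support. lia.
      * intros f Hf. apply pear_prob_support. lia.
  (* An exploring state sends its mass on to (s+1, f) and (s, f+1); none leaves the square,
     since the mass at time t sits on s + f <= t < S N. *)
  - destruct N as [|N]; [lia|]. rewrite <- (IH (S N)) by lia. cbn [pear_prob].
    set (P := pear_prob VP p v t). set (ex := explore VP p). set (c := choiceN VP v).
    set (A s f := if ex s f then 0 else P s f).
    set (B s f := if ex s f then P s f * c else 0).
    set (C s f := if ex s f then P s f * (1 - c) else 0).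
    transitivity
      (sum_f_R0 (fun s => sum_f_R0 (fun f => A s f) (S N)) (S N)
       + sum_f_R0 (fun s => match s with O => 0 | S s' =>
                              sum_f_R0 (fun f => B s' f) (S N) end) (S N)
       + sum_f_R0 (fun s => sum_f_R0 (fun f => match f with O => 0 | S f' =>
                                                  C s f' end) (S N)) (S N)).
    { rewrite <- !sum_plus. apply sum_eq. intros s _.
      destruct s as [|s]; cbn beta iota; [rewrite Rplus_0_r|];
        rewrite <- !sum_plus; apply sum_eq; intros f _; unfold A, B, C; destruct f; ring. }
    rewrite sum_f_R0_shift.
    2:{ rewrite (sum_eq _ (fun _ => 0)), sum_cte; [ring|]. intros f _.
        unfold B, P. rewrite pear_prob_support by lia. destruct (ex _ _); ring. }
    rewrite (sum_eq (fun s => sum_f_R0 (fun f => match f with O => 0 | S f' => C s f' end) (S N))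
                    (fun s => sum_f_R0 (fun f => C s f) (S N))).
    2:{ intros s _. apply sum_f_R0_shift.
        unfold C, P. rewrite pear_prob_support by lia. destruct (ex _ _); ring. }
    rewrite <- !sum_plus. apply sum_eq. intros s _. rewrite <- !sum_plus. apply sum_eq.
    intros f _. unfold A, B, C. destruct (ex s f); ring.
Qed.

Lemma pear_prob_no_failure t s :
  (forall k, (k < t)%nat -> explore VP p k 0 = true) ->
  pear_prob VP p v t s 0 = if Nat.eqb s t then choiceN VP v ^ t else 0.
Proof.
  revert s. induction t as [|t IH]; intros s Hex.
  - destruct s; reflexivity.
  - assert (IHt : forall s, pear_prob VP p v t s 0 = if Nat.eqb s t then choiceN VP v ^ t else 0)
      by (intros s'; apply IH; intros k Hk; apply Hex; lia).
    assert (Ht : explore VP p t 0 = true) by (apply Hex; lia).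
    assert (Hstay : (if explore VP p s 0 then 0 else pear_prob VP p v t s 0) = 0).
    { rewrite IHt. destruct (Nat.eqb_spec s t) as [->|_]; [now rewrite Ht|].
      now destruct (explore VP p s 0). }
    cbn [pear_prob]. rewrite Hstay. destruct s as [|s]; cbn beta iota; [simpl; ring|].
    rewrite IHt. destruct (Nat.eqb_spec s t) as [->|Hne].
    + rewrite Ht, !Nat.eqb_refl. simpl. ring.
    + replace (Nat.eqb (S s) (S t)) with false by (symmetry; apply Nat.eqb_neq; lia).
      destruct (explore VP p s 0); ring.
Qed.

Lemma pear_time_util_no_failure t :
  (forall s f, (s <= t)%nat -> (f <= t)%nat -> explore VP p s f = Nat.eqb f 0) ->
  pear_time_util VP p v t
  = choiceN VP v ^ t * emax2 VP v + (1 - choiceN VP v ^ t) * emax2 VP VP.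
Proof.
  (* The stage utility is emax2 VP VP off the line f = 0, which carries mass c^t, at s = t. *)
  intros Hex. unfold pear_time_util, pear_stage_util.
  set (E := emax2 VP v). set (L := emax2 VP VP). set (P := pear_prob VP p v t).
  rewrite (sum_eq _ (fun s => sum_f_R0 (fun f => P s f) t * L + P s 0%nat * (E - L))).
  2:{ intros s Hs.
      assert (Hhead : sum_f_R0 (fun f => if Nat.eqb f 0 then P s f * (E - L) else 0) t
                      = P s 0%nat * (E - L)).
      { rewrite (sum_f_R0_single _ t 0); [reflexivity|lia|].
        intros [|f] Hf; [contradiction|reflexivity]. }
      rewrite <- Hhead, Rmult_comm, scal_sum, <- sum_plus. apply sum_eq. intros f Hf.
      rewrite Hex by lia. destruct (Nat.eqb f 0); ring. }
  rewrite sum_plus, <- !scal_sum. unfold P. rewrite pear_prob_mass by lia.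
  rewrite (sum_f_R0_single _ t t), pear_prob_no_failure, Nat.eqb_refl; try lia.
  - fold E L. ring.
  - intros k Hk. rewrite Hex by lia. reflexivity.
  - intros s Hs. rewrite pear_prob_no_failure.
    + destruct (Nat.eqb_spec s t); [contradiction|reflexivity].
    + intros k Hk. rewrite Hex by lia. reflexivity.
Qed.

Lemma pear_time_util_bounds t :
  0 <= pear_time_util VP p v t <= emax2 VP v + emax2 VP VP.
Proof.
  pose proof (emax2_nonneg VP v). pose proof (emax2_nonneg VP VP).
  assert (Hstage : forall s f, 0 <= pear_stage_util VP p v s f <= emax2 VP v + emax2 VP VP)
    by (intros s f; unfold pear_stage_util; destruct (explore _ _ _ _); lra).
  unfold pear_time_util. split.
  - apply cond_pos_sum. intros s. apply cond_pos_sum. intros f.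
    apply Rmult_le_pos; [apply pear_prob_nonneg|apply Hstage].
  - rewrite <- (Rmult_1_l (emax2 VP v + emax2 VP VP)), <- (pear_prob_mass t t) by lia.
    rewrite Rmult_comm, scal_sum. apply sum_Rle. intros s _.
    rewrite Rmult_comm, scal_sum. apply sum_Rle. intros f _.
    apply Rmult_le_compat_l; [apply pear_prob_nonneg|apply Hstage].
Qed.

End PearProcess.

(** * PEAR explores until the first rejection *)

Lemma pow_le_pow_of_le_1 (x : R) (m n : nat) :
  0 <= x <= 1 -> (m <= n)%nat -> x ^ n <= x ^ m.
Proof.
  intros Hx Hmn. induction Hmn as [|n _ IH]; [lra|].
  pose proof (pow_le x n (proj1 Hx)). simpl. nra.
Qed.

Definition likelihood_ratio (VP p : R) (s f : nat) : R :=
  rho2 VP ^ s * (1 - rho2 VP) ^ f / (rho1 VP p ^ s * (1 - rho1 VP p) ^ f).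

Lemma explore_iff_likelihood_ratio_le_1 (VP p : R) (s f : nat) :
  0 < p < 1 -> explore VP p s f = true <-> likelihood_ratio VP p s f <= 1.
Proof.
  intros Hp.
  pose proof (choiceN_bounds VP vlow) as H2. pose proof (choiceN_bounds VP (vhigh p)) as H1.
  change (choiceN VP vlow) with (rho2 VP) in H2.
  change (choiceN VP (vhigh p)) with (rho1 VP p) in H1.
  assert (HR : 0 <= likelihood_ratio VP p s f).
  { apply Rdiv_le_0_compat.
    - apply Rmult_le_pos; apply pow_le; lra.
    - apply Rmult_lt_0_compat; apply pow_lt; lra. }
  unfold explore, posterior. fold (likelihood_ratio VP p s f).
  set (R := likelihood_ratio VP p s f) in *.
  assert (Hodds : 0 <= (1 - p) / p * R)
    by (apply Rmult_le_pos; [apply Rdiv_le_0_compat|]; lra).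
  assert (Hprod : p * (1 + (1 - p) / p * R) = p + (1 - p) * R) by (field; lra).
  destruct (Rle_dec p (/ (1 + (1 - p) / p * R))) as [Hle|Hgt]; split; intros H; try easy.
  - apply (Rmult_le_compat_r (1 + (1 - p) / p * R)) in Hle; [|lra].
    rewrite Rinv_l, Hprod in Hle by lra. nra.
  - exfalso. apply Hgt. apply (Rmult_le_reg_r (1 + (1 - p) / p * R)); [lra|].
    rewrite Rinv_l, Hprod by lra. nra.
Qed.

Lemma explore_no_failure (VP p : R) (T : nat) :
  0 < p < 1 -> 1 - rho1 VP p < rho2 VP ^ T * (1 - rho2 VP) ^ T ->
  forall s f, (s <= T)%nat -> (f <= T)%nat -> explore VP p s f = Nat.eqb f 0.
Proof.
  intros Hp Hrho s f Hs Hf.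
  pose proof (choiceN_bounds VP vlow) as H2. pose proof (choiceN_bounds VP (vhigh p)) as H1.
  change (choiceN VP vlow) with (rho2 VP) in H2.
  change (choiceN VP (vhigh p)) with (rho1 VP p) in H1.
  assert (H21 : rho2 VP <= rho1 VP p).
  { apply choiceN_le_compat. unfold vlow, vhigh.
    assert (0 < (1 - p) / p) by (apply Rdiv_lt_0_compat; lra). lra. }
  destruct f as [|f].
  - apply explore_iff_likelihood_ratio_le_1; [exact Hp|].
    unfold likelihood_ratio. simpl. rewrite !Rmult_1_r.
    apply Rle_div_l; [apply pow_lt; lra|]. rewrite Rmult_1_l. apply pow_incr. lra.
  - simpl. destruct (explore VP p s (S f)) eqn:Hex; [exfalso|reflexivity].
    apply explore_iff_likelihood_ratio_le_1 in Hex; [|exact Hp].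
    unfold likelihood_ratio in Hex.
    assert (Hnum : rho2 VP ^ T * (1 - rho2 VP) ^ T <= rho2 VP ^ s * (1 - rho2 VP) ^ S f).
    { apply Rmult_le_compat; try (apply pow_le; lra); apply pow_le_pow_of_le_1; lra || lia. }
    assert (Hden : rho1 VP p ^ s * (1 - rho1 VP p) ^ S f <= 1 - rho1 VP p).
    { pose proof (pow_le_pow_of_le_1 (rho1 VP p) 0 s ltac:(lra) ltac:(lia)).
      pose proof (pow_le_pow_of_le_1 (1 - rho1 VP p) 0 f ltac:(lra) ltac:(lia)).
      pose proof (pow_le (rho1 VP p) s ltac:(lra)).
      pose proof (pow_le (1 - rho1 VP p) f ltac:(lra)).
      rewrite pow_O in *. rewrite <- tech_pow_Rmult.
      assert (rho1 VP p ^ s * (1 - rho1 VP p) ^ f <= 1) by nra. nra. }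
    assert (Hpos : 0 < rho1 VP p ^ s * (1 - rho1 VP p) ^ S f)
      by (apply Rmult_lt_0_compat; apply pow_lt; lra).
    apply Rle_div_l in Hex; [|exact Hpos]. lra.
Qed.

Lemma explore_no_failure_eventually (VP : R) (T : nat) :
  at_right 0 (fun p => forall s f, (s <= T)%nat -> (f <= T)%nat ->
                       explore VP p s f = Nat.eqb f 0).
Proof.
  pose proof (choiceN_bounds VP vlow) as H2. change (choiceN VP vlow) with (rho2 VP) in H2.
  assert (Hk : 0 < rho2 VP ^ T * (1 - rho2 VP) ^ T)
    by (apply Rmult_lt_0_compat; apply pow_lt; lra).
  generalize (filter_and _ _ (at_right_0_interval 1 Rlt_0_1)
    (filterlim_eventually_gt _ _ (1 - rho2 VP ^ T * (1 - rho2 VP) ^ T) (rho1_limit VP)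
       ltac:(lra))).
  apply filter_imp. intros p [Hp Hrho]. apply explore_no_failure; lra.
Qed.

(** * Utilities as p -> 0 *)

Definition low_time_util (VP : R) (t : nat) : R :=
  rho2 VP ^ t * emax2 VP vlow + (1 - rho2 VP ^ t) * emax2 VP VP.

Lemma pear_low_time_util_eventually (VP : R) (t : nat) :
  at_right 0 (fun p => pear_time_util VP p vlow t = low_time_util VP t).
Proof.
  generalize (explore_no_failure_eventually VP t). apply filter_imp. intros p Hex.
  exact (pear_time_util_no_failure VP p vlow t Hex).
Qed.

Lemma pear_high_term_limit (VP : R) (t : nat) :
  filterlim (fun p => p * pear_time_util VP p (vhigh p) t) (at_right 0) (locally 1).
Proof.
  apply (filterlim_ext_loc (fun p => rho1 VP p ^ t * (p * emax2 VP (vhigh p))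
                                     + (1 - rho1 VP p ^ t) * (p * emax2 VP VP))).
  - generalize (explore_no_failure_eventually VP t). apply filter_imp. intros p Hex.
    rewrite (pear_time_util_no_failure VP p (vhigh p) t Hex).
    change (choiceN VP (vhigh p)) with (rho1 VP p). ring.
  - pose proof (filterlim_pow_R _ _ t (rho1_limit VP)) as Hrho.
    pose proof (filterlim_plus_R _ _ _ _
      (filterlim_mult_R _ _ _ _ Hrho (p_emax2_vhigh_limit VP))
      (filterlim_mult_R _ _ _ _ (filterlim_minus_R _ _ _ _ (filterlim_const 1) Hrho)
         (filterlim_mult_R _ _ _ _ (filterlim_at_right_id 0) (filterlim_const (emax2 VP VP)))))
      as Hlim.
    rewrite pow1, Rmult_0_l, Rmult_0_r, Rplus_0_r, Rmult_1_l in Hlim. exact Hlim.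
Qed.

Definition pear_discounted_term (VP p delta : R) (t : nat) : R :=
  delta ^ t * (p * pear_time_util VP p (vhigh p) t + (1 - p) * pear_time_util VP p vlow t).

Lemma pear_discounted_term_limit (VP delta : R) (t : nat) :
  filterlim (fun p => pear_discounted_term VP p delta t)
            (at_right 0) (locally (delta ^ t * (1 + low_time_util VP t))).
Proof.
  unfold pear_discounted_term.
  apply filterlim_mult_R; [apply filterlim_const|].
  apply filterlim_plus_R; [apply pear_high_term_limit|].
  rewrite <- (Rmult_1_l (low_time_util VP t)).
  apply filterlim_mult_R.
  - pose proof (filterlim_minus_R _ _ _ _ (filterlim_const 1) (filterlim_at_right_id 0)) as H.
    rewrite Rminus_0_r in H. exact H.
  - apply (filterlim_ext_loc (fun _ => low_time_util VP t)); [|apply filterlim_const].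
    generalize (pear_low_time_util_eventually VP t). apply filter_imp. intros p Hp.
    now rewrite Hp.
Qed.

Lemma pear_discounted_term_dominated (VP delta : R) : 0 <= delta ->
  at_right 0 (fun p => forall t, Rabs (pear_discounted_term VP p delta t)
                       <= (2 + emax2 VP VP + (emax2 VP vlow + emax2 VP VP)) * delta ^ t).
Proof.
  intros Hdelta. unfold pear_discounted_term.
  generalize (filter_and _ _ (at_right_0_interval 1 Rlt_0_1)
    (filterlim_eventually_lt _ _ 2 (p_emax2_vhigh_limit VP) ltac:(lra))).
  apply filter_imp. intros p [Hp HpE] t.
  pose proof (pear_time_util_bounds VP p (vhigh p) t).
  pose proof (pear_time_util_bounds VP p vlow t).
  pose proof (pow_le delta t Hdelta). pose proof (emax2_nonneg VP VP).
  rewrite Rabs_mult, (Rabs_right (delta ^ t)), Rmult_comm by lra.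
  apply Rmult_le_compat_r; [lra|].
  assert (0 <= p * pear_time_util VP p (vhigh p) t <= 2 + emax2 VP VP) by nra.
  assert (0 <= (1 - p) * pear_time_util VP p vlow t <= emax2 VP vlow + emax2 VP VP) by nra.
  rewrite Rabs_right; lra.
Qed.

Lemma UtilPEAR_limit (VP delta : R) : 0 <= delta < 1 ->
  filterlim (fun p => UtilPEAR VP p delta) (at_right 0)
    (locally ((1 + emax2 VP VP) / (1 - delta)
              + (emax2 VP vlow - emax2 VP VP) / (1 - delta * rho2 VP))).
Proof.
  intros Hdelta.
  pose proof (choiceN_bounds VP vlow) as H2. change (choiceN VP vlow) with (rho2 VP) in H2.
  assert (Hseries : is_series (fun t => delta ^ t * (1 + low_time_util VP t))
    ((1 + emax2 VP VP) / (1 - delta)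
     + (emax2 VP vlow - emax2 VP VP) / (1 - delta * rho2 VP))).
  { eapply is_series_ext; [|apply (is_series_plus _ _ _ _
      (is_series_geom_scal (1 + emax2 VP VP) delta Hdelta)
      (is_series_geom_scal (emax2 VP vlow - emax2 VP VP) (delta * rho2 VP) ltac:(nra)))].
    intros t. unfold low_time_util. rewrite Rpow_mult_distr.
    unfold plus. simpl. ring. }
  rewrite <- (is_series_unique _ _ Hseries).
  apply (filterlim_Series_dominated (fun p => pear_discounted_term VP p delta) _
           (2 + emax2 VP VP + (emax2 VP vlow + emax2 VP VP)) delta Hdelta).
  - intros t. apply pear_discounted_term_limit.
  - apply pear_discounted_term_dominated. lra.
Qed.

Lemma opt_mean_limit (VP : R) : 0 <= VP ->
  filterlim (fun p => p * opt_stage_util VP (vhigh p) + (1 - p) * opt_stage_util VP vlow)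
            (at_right 0) (locally (1 + emax2 VP VP)).
Proof.
  intros HVP.
  apply (filterlim_ext_loc (fun p => p * emax2 (vhigh p) (vhigh p) + (1 - p) * emax2 VP VP)).
  - generalize (at_right_0_interval (/ (1 + VP)) ltac:(apply Rinv_0_lt_compat; lra)).
    apply filter_imp. intros p Hp. unfold opt_stage_util.
    destruct (Rlt_dec VP vlow) as [Hlow|_]; [unfold vlow in Hlow; lra|].
    destruct (Rlt_dec VP (vhigh p)) as [_|Hhigh]; [reflexivity|exfalso; apply Hhigh].
    assert (p * (1 + VP) < 1).
    { destruct Hp as [Hp0 Hp1]. apply (Rmult_lt_compat_r (1 + VP)) in Hp1; [|lra].
      rewrite Rinv_l in Hp1 by lra. exact Hp1. }
    unfold vhigh. apply Rlt_div_r; lra.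
  - pose proof (filterlim_plus_R _ _ _ _ p_emax2_vhigh_vhigh_limit
      (filterlim_mult_R _ _ _ _
         (filterlim_minus_R _ _ _ _ (filterlim_const 1) (filterlim_at_right_id 0))
         (filterlim_const (emax2 VP VP)))) as Hlim.
    rewrite Rminus_0_r, Rmult_1_l in Hlim. exact Hlim.
Qed.

Lemma UtilOPT_eq (VP p delta : R) : 0 <= delta < 1 ->
  UtilOPT VP p delta
  = (p * opt_stage_util VP (vhigh p) + (1 - p) * opt_stage_util VP vlow) / (1 - delta).
Proof.
  intros Hdelta. unfold UtilOPT. apply is_series_unique.
  eapply is_series_ext; [|apply is_series_geom_scal, Hdelta].
  intros t. simpl. apply Rmult_comm.
Qed.

Lemma UtilOPT_limit (VP delta : R) : 0 <= VP -> 0 <= delta < 1 ->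
  filterlim (fun p => UtilOPT VP p delta) (at_right 0)
            (locally ((1 + emax2 VP VP) / (1 - delta))).
Proof.
  intros HVP Hdelta.
  apply (filterlim_ext (fun p => (p * opt_stage_util VP (vhigh p)
                                  + (1 - p) * opt_stage_util VP vlow) / (1 - delta))).
  - intros p. symmetry. apply UtilOPT_eq, Hdelta.
  - apply filterlim_div_R; [lra|apply opt_mean_limit, HVP|apply filterlim_const].
Qed.

Theorem corollary1 (VP : R) (HVP : 0 <= VP) :
  exists g : R -> R,
    (exists d0 : R, d0 < 1 /\
       forall delta : R, 0 <= delta -> d0 < delta -> delta < 1 ->
         filterlim (fun p => UtilPEAR VP p delta / UtilOPT VP p delta)
                   (at_right 0) (locally (g delta))) /\
    filterlim g (at_left 1) (locally 1).
Proof.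
  set (L := emax2 VP VP). set (E := emax2 VP vlow). set (r := rho2 VP).
  assert (HL : 0 <= L) by apply emax2_nonneg.
  assert (Hr : 0 < r < 1) by apply (choiceN_bounds VP vlow).
  set (g d := 1 + (E - L) * (1 - d) / ((1 + L) * (1 - d * r))).
  exists g. split.
  - exists 0. split; [lra|]. intros delta Hd0 _ Hd1.
    assert (Hdr : 0 < 1 - delta * r) by nra.
    replace (g delta)
      with (((1 + L) / (1 - delta) + (E - L) / (1 - delta * r)) / ((1 + L) / (1 - delta)))
      by (unfold g; field; lra).
    apply filterlim_div_R.
    + apply Rgt_not_eq, Rdiv_lt_0_compat; lra.
    + apply UtilPEAR_limit. lra.
    + apply UtilOPT_limit; lra.
  - assert (Hder : ex_derive g 1) by (unfold g; auto_derive; nra).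
    pose proof (@ex_derive_continuous R_AbsRing R_NormedModule g 1 Hder) as Hcont.
    assert (Hg1 : g 1 = 1) by (unfold g; rewrite Rminus_diag; unfold Rdiv; ring).
    unfold continuous in Hcont. rewrite Hg1 in Hcont.
    exact (filterlim_filter_le_1 _ (at_left_le_locally 1) Hcont).
Qed.
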